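(* Let $\mathcal{A}\neq\Phi_\ell$ be a central hyperplane arrangement in $V=\mathbb{K}^\ell$ of rank $r$. Let $\pi=(\pi_1,\ldots,\pi_s)$ be a partition of $\mathcal{A}$, let $H_0\in\pi_1$ and let $(\mathcal{A},\mathcal{A}',\mathcal{A}'')$ be the triple associated with $H_0$. Then any two of the following statements imply the third: (i) $\pi$ is nice for $\mathcal{A}$; (ii) $\pi'$ is nice for $\mathcal{A}'$; (iii) the restriction map $\mathrm{R}:\mathcal{A}\setminus\pi_1\to\mathcal{A}''$ is bijective and $\pi''$ is nice for $\mathcal{A}''$.
   Context: $\mathbb{K}$ is a field; a central arrangement is a finite set of linear hyperplanes in $V$; $\Phi_\ell$ is the empty arrangement; the rank of $\mathcal{A}$ is the codimension of $\bigcap_{H\in\mathcal{A}}H$. $L(\mathcal{A})$ is the set of intersections of subsets of $\mathcal{A}$ ($V$ being the empty intersection); for $X\in L(\mathcal{A})$, $\mathcal{A}_X=\{H\in\mathcal{A}\mid X\subseteq H\}$. For $H_0\in\mathcal{A}$ the triple is $\mathcal{A}'=\mathcal{A}\setminus\{H_0\}$, $\mathcal{A}''=\{H_0\cap H\mid H\in\mathcal{A}'\}$ (an arrangement in $H_0$). A partition $\pi=(\pi_1,\ldots,\pi_s)$ of $\mathcal{A}$ (ordered tuple of non-empty disjoint subsets covering $\mathcal{A}$) is independent if for every choice $H_i\in\pi_i$, $\operatorname{codim}(H_1\cap\cdots\cap H_s)=s$; for $X\in L(\mathcal{A})$ the induced partition $\pi_X$ of $\mathcal{A}_X$ consists of the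 non-empty sets $\pi_i\cap\mathcal{A}_X$. $\pi$ is nice (a factorization) for $\mathcal{A}$ if it is independent and for every $X\in L(\mathcal{A})\setminus\{V\}$ some block of $\pi_X$ is a singleton (the empty partition is nice for an empty arrangement). For $H_0\in\pi_1$: $\pi'$ is the partition of $\mathcal{A}'$ by the non-empty sets $\pi_i\cap\mathcal{A}'$; $\mathrm{R}:\mathcal{A}\setminus\pi_1\to\mathcal{A}''$ is $H\mapsto H\cap H_0$; and $\pi''=(\pi_2'',\ldots,\pi_s'')$ with $\pi_i''=\mathrm{R}(\pi_i)$; ''$\pi''$ is nice for $\mathcal{A}''$'' includes that $\pi''$ is a partition of $\mathcal{A}''$. *)

From HB Require Import structures.
From mathcomp Require Import all_boot all_algebra.
From mathcomp Require Import finmap.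

Set Implicit Arguments.
Unset Strict Implicit.
Unset Printing Implicit Defensive.

Local Open Scope fset_scope.

(* Linear subspaces of V = K^l are {vspace 'rV[K]_l}.  Arrangements are
   considered relative to an ambient subspace W (W = fullv for V itself,
   W = H0 for the restriction A''). *)
Notation sub K l := {vspace 'rV[K]_l}.

Definition hyperplane_in (K : fieldType) (l : nat) (W H : sub K l) : bool :=
  (H <= W)%VS && ((\dim H).+1 == \dim W).

Definition arrangement (K : fieldType) (l : nat) (W : sub K l)
  (A : {fset sub K l}) : Prop :=
  forall H, H \in A -> hyperplane_in W H.

Definition capW (K : fieldType) (l : nat) (W : sub K l) (B : seq (sub K l)) :=
  \big[capv/W]_(H <- B) H.

Definition codim (K : fieldType) (l : nat) (W X : sub K l) : nat :=
  (\dim W - \dim X)%N.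

Definition inL (K : fieldType) (l : nat) (W : sub K l) (A : {fset sub K l})
  (X : sub K l) : Prop :=
  exists2 B : {fset sub K l}, B `<=` A & X = capW W B.

Definition localA (K : fieldType) (l : nat) (A : {fset sub K l}) (X : sub K l)
  : {fset sub K l} := [fset H in A | (X <= H)%VS].

(* pi = (pi_1, ..., pi_s) as a sequence of blocks; pi_{i+1} = nth fset0 pi i *)
Definition is_partition (K : fieldType) (l : nat) (A : {fset sub K l})
  (pi : seq {fset sub K l}) : Prop :=
  [/\ forall i, (i < size pi)%N -> nth fset0 pi i != fset0,
      forall i j H, (i < size pi)%N -> (j < size pi)%N ->
        H \in nth fset0 pi i -> H \in nth fset0 pi j -> i = j
    & forall H, H \in A <-> exists2 i, (i < size pi)%N & H \in nth fset0 pi i].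

Definition independent (K : fieldType) (l : nat) (W : sub K l)
  (pi : seq {fset sub K l}) : Prop :=
  forall f : nat -> sub K l,
    (forall i, (i < size pi)%N -> f i \in nth fset0 pi i) ->
    codim W (\big[capv/W]_(i < size pi) f i) = size pi.

Definition nice (K : fieldType) (l : nat) (W : sub K l) (A : {fset sub K l})
  (pi : seq {fset sub K l}) : Prop :=
  [/\ is_partition A pi, independent W pi
    & forall X, inL W A X -> X != W ->
        exists2 i, (i < size pi)%N &
          #|` (nth fset0 pi i `&` localA A X)| = 1%N].

Definition deletion (K : fieldType) (l : nat) (A : {fset sub K l}) (H0 : sub K l)
  : {fset sub K l} := A `\ H0.

Definition restriction (K : fieldType) (l : nat) (A : {fset sub K l})
  (H0 : sub K l) : {fset sub K l} :=
  [fset (H :&: H0)%VS | H in A `\ H0].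

Definition pi_del (K : fieldType) (l : nat) (H0 : sub K l)
  (pi : seq {fset sub K l}) : seq {fset sub K l} :=
  [seq B <- [seq B `\ H0 | B <- pi] | B != fset0].

Definition pi_res (K : fieldType) (l : nat) (H0 : sub K l)
  (pi : seq {fset sub K l}) : seq {fset sub K l} :=
  [seq [fset (H :&: H0)%VS | H in B] | B <- behead pi].

Definition R_bijective (K : fieldType) (l : nat) (A : {fset sub K l})
  (H0 : sub K l) (pi : seq {fset sub K l}) : Prop :=
  {in A `\` nth fset0 pi 0 &, injective (fun H => (H :&: H0)%VS)} /\
  (forall Y, Y \in restriction A H0 ->
     exists2 H, H \in A `\` nth fset0 pi 0 & (H :&: H0)%VS = Y).

(* Niceness is a local condition: at every X in L(A) some block must meet A_X
   in a single hyperplane.  L(A') is contained in L(A), and L(A'') consists of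
   the X in L(A) lying in H0, with A''_X obtained from A_X by intersecting with
   H0.  So singleton blocks pass between pi, pi' and pi'' (towards pi through
   the injectivity of R), and independence passes by adding H0 to, or removing
   it from, a choice of hyperplanes, which changes the codimension by one.
   The substantial point is that (i) and (ii) force R to be injective: if
   H <> H' outside pi_1 have the same trace X on H0, then X has codimension 2,
   so by independence the hyperplanes through X come from pi_1 and one other
   block; niceness of pi at X makes H0 the only one from pi_1, and niceness of
   pi' at X = H :&: H' then has no block left to use. *)

From HB Require Import structures.
From mathcomp Require Import all_boot all_algebra.
From mathcomp Require Import finmap zify.

Set Implicit Arguments.
Unset Strict Implicit.
Unset Printing Implicit Defensive.
Local Open Scope fset_scope.

Section Subspaces.
Variables (K : fieldType) (l : nat).
Local Notation S := (sub K l).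
Implicit Types (W U X H : S) (B : seq S).

Lemma bigcapv_subP W U (I : Type) (r : seq I) (P : pred I) (F : I -> S) :
  (U <= \big[capv/W]_(i <- r | P i) F i)%VS =
  (U <= W)%VS && all (fun i => P i ==> (U <= F i)%VS) r.
Proof.
elim: r => [|i r IH]; rewrite ?big_nil ?big_cons /= ?andbT //.
case: (P i) => //=; rewrite subv_cap IH.
by case: (U <= F i)%VS; rewrite ?andbF.
Qed.

Lemma bigcapv_subW W (I : Type) (r : seq I) (P : pred I) (F : I -> S) :
  (\big[capv/W]_(i <- r | P i) F i <= W)%VS.
Proof.
by have := subvv (\big[capv/W]_(i <- r | P i) F i); rewrite bigcapv_subP => /andP[].
Qed.

Lemma capW_sub W B : (capW W B <= W)%VS.
Proof. exact: bigcapv_subW. Qed.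

Lemma capW_subH W B H : H \in B -> (capW W B <= H)%VS.
Proof.
move=> HB; have := subvv (capW W B).
by rewrite {2}/capW bigcapv_subP => /andP[_ /allP /(_ H HB)].
Qed.

Lemma sub_capW W B U :
  (U <= W)%VS -> (forall H, H \in B -> (U <= H)%VS) -> (U <= capW W B)%VS.
Proof. by move=> UW UB; rewrite /capW bigcapv_subP UW; apply/allP => H /UB. Qed.

Lemma subv_ext X U : (forall Y, (Y <= X)%VS = (Y <= U)%VS) -> X = U.
Proof. by move=> eXU; apply: subv_anti; rewrite -eXU subvv eXU subvv. Qed.

Lemma eq_capW W B1 B2 : B1 =i B2 -> capW W B1 = capW W B2.
Proof. by move=> eB; apply: subv_ext => U; rewrite !bigcapv_subP (eq_all_r eB). Qed.

Lemma bigcapvI W (I : Type) (r : seq I) (P : pred I) (F : I -> S) :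
  \big[capv/W]_(i <- r | P i) (F i :&: W)%VS =
  (W :&: \big[capv/fullv]_(i <- r | P i) F i)%VS.
Proof.
apply: subv_ext => U; rewrite subv_cap !bigcapv_subP subvf /=.
case: (boolP (U <= W)%VS) => //= UW.
by apply: eq_all => i; rewrite subv_cap UW andbT.
Qed.

Lemma codimS W X U : (X <= U)%VS -> codim W U <= codim W X.
Proof. by move=> XU; rewrite /codim; have := dimvS XU; lia. Qed.

Lemma codimI_le W X U : (X <= W)%VS -> (U <= W)%VS ->
  codim W (X :&: U) <= codim W X + codim W U.
Proof.
move=> XW UW; rewrite /codim; have := dimv_sum_cap X U.
have : \dim (X + U) <= \dim W by apply: dimvS; rewrite subv_add XW UW.
by have := dimvS XW; have := dimvS UW; lia.
Qed.

Lemma codim_hyperplane W H : hyperplane_in W H -> codim W H = 1%N.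
Proof. by move=> /andP[_ /eqP dH]; rewrite /codim -dH subSnn. Qed.

Lemma codim_sub_hyperplane H X : hyperplane_in fullv H -> (X <= H)%VS ->
  codim fullv X = (codim H X).+1.
Proof. by move=> /andP[_ /eqP dH] XH; rewrite /codim -dH; have := dimvS XH; lia. Qed.

Lemma hyperplane_neq W H : hyperplane_in W H -> H != W.
Proof. by move=> /andP[_ /eqP dH]; apply: contra_eq_neq dH => ->; lia. Qed.

Lemma hyperplane_eq W H H' : hyperplane_in W H -> hyperplane_in W H' ->
  (H <= H')%VS -> H = H'.
Proof.
move=> /andP[_ /eqP dH] /andP[_ /eqP dH'] HH'.
by apply/eqP; rewrite eqEdim HH' /=; lia.
Qed.

Lemma dim_hyperplaneI W H H' : hyperplane_in W H -> hyperplane_in W H' ->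
  H != H' -> (\dim (H :&: H') + 2)%N = \dim W.
Proof.
move=> hH hH' neHH'; have /andP[HW dH] := hH; have /andP[H'W dH'] := hH'.
have : \dim (H + H') <= \dim W by apply: dimvS; rewrite subv_add HW H'W.
have : \dim H < \dim (H + H').
  rewrite ltnNge; apply: contra neHH' => dHH'.
  have /eqP eH : H == (H + H')%VS by rewrite eqEdim addvSl.
  by rewrite (hyperplane_eq hH' hH) // [X in (_ <= X)%VS]eH addvSr.
by have := dimv_sum_cap H H'; move: dH dH' => /eqP dH /eqP dH'; lia.
Qed.

Lemma hyperplaneI_eq W H1 H2 H3 H4 :
  hyperplane_in W H1 -> hyperplane_in W H2 -> hyperplane_in W H3 ->
  hyperplane_in W H4 -> H1 != H2 -> H3 != H4 ->
  (H1 :&: H2 <= H3 :&: H4)%VS -> (H1 :&: H2)%VS = (H3 :&: H4)%VS.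
Proof.
move=> h1 h2 h3 h4 n12 n34 le; apply/eqP; rewrite eqEdim le /=.
by have := dim_hyperplaneI h1 h2 n12; have := dim_hyperplaneI h3 h4 n34; lia.
Qed.

Lemma codim_bigcapv_le W (I : eqType) (r : seq I) (P : pred I) (F : I -> S) :
  (forall i, i \in r -> P i -> hyperplane_in W (F i)) ->
  codim W (\big[capv/W]_(i <- r | P i) F i) <= count P r.
Proof.
elim: r => [|i r IH] hF; first by rewrite big_nil /codim subnn.
rewrite big_cons /=; have {}IH := IH (fun j jr => hF j (mem_behead (s := i :: r) jr)).
case: ifP => Pi //=; have hFi := hF i (mem_head i r) Pi.
apply: leq_trans (codimI_le _ _) _; rewrite ?bigcapv_subW //; first by case/andP: hFi.
by rewrite codim_hyperplane // leq_add2l.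
Qed.

Lemma codim_bigcapv_ord_le W n (F : nat -> S) :
  (forall i, i < n -> hyperplane_in W (F i)) ->
  codim W (\big[capv/W]_(i < n) F i) <= n.
Proof.
move=> hF; rewrite -(big_mkord xpredT).
apply: leq_trans (codim_bigcapv_le _) _ => [i|].
  by rewrite mem_index_iota => /andP[_ /hF].
by rewrite (leq_trans (count_size _ _)) ?size_iota ?subn0.
Qed.

End Subspaces.

Section Arrangements.
Variables (K : fieldType) (l : nat).
Local Notation S := (sub K l).
Implicit Types (W X Y H L M : S) (A B C : {fset S}) (pi : seq {fset S}).

Lemma in_localA A X H : (H \in localA A X) = (H \in A) && (X <= H)%VS.
Proof. by rewrite in_fset. Qed.

Lemma in_deletion A H0 H : (H \in deletion A H0) = (H != H0) && (H \in A).
Proof. exact: in_fsetD1. Qed.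

Lemma restrictionP A H0 Y :
  reflect (exists2 H, (H != H0) && (H \in A) & Y = (H :&: H0)%VS)
          (Y \in restriction A H0).
Proof.
apply: (iffP idP) => [/imfsetP [H HA ->]|[H HA ->]].
  by exists H => //; move: HA; rewrite in_fsetD1.
by apply/imfsetP; exists H; rewrite ?in_fsetD1.
Qed.

Lemma inL_localP W A X : inL W A X <-> X = capW W (localA A X).
Proof.
split=> [[B BA ->]|eX]; last first.
  by exists (localA A X) => //; apply/fsubsetP => H; rewrite in_localA => /andP[].
apply: subv_anti; apply/andP; split; apply: sub_capW; rewrite ?capW_sub //.
  by move=> H; rewrite in_localA => /andP[].
move=> H HB; apply: capW_subH.
by rewrite in_localA (fsubsetP BA) ?capW_subH.
Qed.

Lemma inL_capv A H H' : H \in A -> H' \in A -> inL fullv A (H :&: H')%VS.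
Proof.
move=> HA H'A; exists [fset H; H'].
  by apply/fsubsetP => M; rewrite in_fset2 => /orP[] /eqP ->.
apply: subv_ext => U; rewrite subv_cap /capW bigcapv_subP subvf /=.
apply/andP/allP => [[UH UH'] M|UHH']; first by rewrite in_fset2 => /orP[] /eqP ->.
by rewrite !UHH' // in_fset2 eqxx ?orbT.
Qed.

Lemma inL_closure W A X : (X <= W)%VS -> inL W A (capW W (localA A X)).
Proof.
move=> XW; apply/inL_localP; apply: eq_capW => H; rewrite !in_localA.
have [HA|//] := boolP (H \in A); apply/idP/idP => [XH|X'H].
  by apply: capW_subH; rewrite in_localA HA XH.
by apply: (subv_trans _ X'H); apply: sub_capW => // M; rewrite in_localA => /andP[].
Qed.

Definition sole_in A C X L :=
  [/\ L \in C, L \in A, (X <= L)%VS &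
      forall M, M \in C -> M \in A -> (X <= M)%VS -> M = L].

Lemma card_local1P A C X :
  #|` C `&` localA A X| = 1%N <-> exists L, sole_in A C X L.
Proof.
split=> [/eqP/cardfs1P [L eCX]|[L [LC LA XL uL]]].
  have : L \in C `&` localA A X by rewrite eCX in_fset1.
  rewrite in_fsetI in_localA => /and3P[LC LA XL]; exists L; split=> // M MC MA XM.
  have : M \in C `&` localA A X by rewrite in_fsetI in_localA MC MA XM.
  by rewrite eCX in_fset1 => /eqP.
apply/eqP/cardfs1P; exists L; apply/fsetP => M.
rewrite [RHS]in_fset1 in_fsetI in_localA.
by apply/idP/eqP => [/and3P[MC MA XM]|->]; [exact: uL | rewrite LC LA XL].
Qed.

Lemma eq_sole_in A C C' X L : (forall M, M \in A -> (M \in C) = (M \in C')) ->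
  sole_in A C X L -> sole_in A C' X L.
Proof.
move=> eC [LC LA XL uL]; split; rewrite -?eC // => M MC' MA.
by apply: uL; rewrite ?eC.
Qed.

Lemma nice_witness W A pi X : nice W A pi -> inL W A X -> X != W ->
  exists2 k, k < size pi & exists L, sole_in A (nth fset0 pi k) X L.
Proof.
by case=> _ _ hloc XL XW; have [k kS /card_local1P] := hloc X XL XW; exists k.
Qed.

Lemma restriction_lift H0 (F : nat -> {fset S}) (f : nat -> S) n :
  (forall i, i < n -> f i \in [fset (H :&: H0)%VS | H in F i]) ->
  exists g : nat -> S, forall i, i < n -> g i \in F i /\ (g i :&: H0)%VS = f i.
Proof.
move=> hf; exists (fun i => nth H0 [seq H <- enum_fset (F i) | (H :&: H0)%VS == f i] 0).
move=> i /hf /imfsetP [H HF eH].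
set s := [seq _ <- _ | _]; have : nth H0 s 0 \in s.
  by apply: mem_nth; rewrite size_filter -has_count; apply/hasP; exists H; rewrite ?eH.
by rewrite mem_filter => /andP[/eqP].
Qed.

Lemma capW_local_restriction A H0 X : H0 \in A -> (X <= H0)%VS ->
  capW H0 (localA (restriction A H0) X) = capW fullv (localA A X).
Proof.
move=> H0A XH0; apply: subv_anti; apply/andP; split.
  apply: sub_capW => [|H]; first exact: subvf.
  rewrite in_localA => /andP[HA XH]; have [->|neH] := eqVneq H H0.
    exact: capW_sub.
  apply: subv_trans (capvSl H H0); apply: capW_subH.
  by rewrite in_localA subv_cap XH XH0 !andbT; apply/restrictionP; exists H; rewrite ?neH.
apply: sub_capW => [|Y]; first by apply: capW_subH; rewrite in_localA H0A XH0.
rewrite in_localA => /andP[/restrictionP [H /andP[_ HA] ->]].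
rewrite !subv_cap => /andP[XH _]; apply/andP; split; apply: capW_subH.
  by rewrite in_localA HA XH.
by rewrite in_localA H0A XH0.
Qed.

Section Partition.
Variables (A : {fset S}) (pi : seq {fset S}).
Hypothesis hp : is_partition A pi.

Lemma partition_mem i H : i < size pi -> H \in nth fset0 pi i -> H \in A.
Proof. by case: hp => _ _ cover iS Hi; apply/cover; exists i. Qed.

Lemma partition_index H : H \in A -> exists2 i, i < size pi & H \in nth fset0 pi i.
Proof. by case: hp => _ _ cover /cover. Qed.

Lemma partition_uniq i j H : i < size pi -> j < size pi ->
  H \in nth fset0 pi i -> H \in nth fset0 pi j -> i = j.
Proof. by case: hp => _ disj _; apply: disj. Qed.

Variable W : S.
Hypotheses (hA : arrangement W A) (hind : independent W pi).

(* Complete the choice on L arbitrarily: the hyperplanes chosen outside L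
   can cut the codimension by at most their number. *)
Lemma independent_codim_ge (L : seq nat) (F : nat -> S) : uniq L ->
  (forall i, i \in L -> i < size pi) ->
  (forall i, i \in L -> F i \in nth fset0 pi i) ->
  size L <= codim W (\big[capv/W]_(i <- L) F i).
Proof.
move=> uL Ls LF.
pose g i := if i \in L then F i else nth W (enum_fset (nth fset0 pi i)) 0.
have hg i : i < size pi -> g i \in nth fset0 pi i.
  rewrite /g; case: ifP => [iL _|_ iS]; first exact: LF.
  case: hp => ne _ _; have /fset0Pn [H HB] := ne i iS.
  have Hin : H \in enum_fset (nth fset0 pi i) by [].
  by apply: mem_nth; move: Hin; case: (enum_fset _).
have := hind hg; rewrite -(big_mkord xpredT) => codim_all.
pose P := predC (mem L).
set bigL := \big[capv/W]_(i <- L) F i.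
set bigP := \big[capv/W]_(i <- index_iota 0 (size pi) | P i) g i.
have sub_all : (bigL :&: bigP <= \big[capv/W]_(0 <= i < size pi) g i)%VS.
  rewrite bigcapv_subP (subv_trans (capvSl _ _) (bigcapv_subW _ _ _ _)) /=.
  apply/allP => i ir; have [iL|niL] := boolP (i \in L).
  - apply: subv_trans (capvSl _ _) _; rewrite /g iL.
    have := subvv bigL; rewrite {2}/bigL bigcapv_subP => /andP[_ /allP].
    exact.
  - apply: subv_trans (capvSr _ _) _.
    have := subvv bigP; rewrite {2}/bigP bigcapv_subP => /andP[_ /allP /(_ i ir)].
    by rewrite /P /= niL.
have cP : codim W bigP <= count P (index_iota 0 (size pi)).
  apply: codim_bigcapv_le => i; rewrite mem_index_iota => /andP[_ iS] _.
  exact/hA/(partition_mem iS (hg i iS)).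
have cL : size L <= count (mem L) (index_iota 0 (size pi)).
  rewrite -size_filter; apply: uniq_leq_size uL _ => i iL.
  by rewrite mem_filter mem_index_iota (Ls i iL) !andbT; exact: iL.
have cI : codim W (bigL :&: bigP) <= codim W bigL + codim W bigP.
  exact: codimI_le (bigcapv_subW _ _ _ _) (bigcapv_subW _ _ _ _).
have := codimS W sub_all; rewrite codim_all.
have := count_predC (mem L) (index_iota 0 (size pi)); rewrite size_iota subn0.
by rewrite -/P; lia.
Qed.

Lemma codim2_two_blocks X a b c Ha Hb Hc : codim W X <= 2 ->
  a < size pi -> b < size pi -> c < size pi ->
  Ha \in nth fset0 pi a -> Hb \in nth fset0 pi b -> Hc \in nth fset0 pi c ->
  (X <= Ha)%VS -> (X <= Hb)%VS -> (X <= Hc)%VS -> a != b -> a != c -> b = c.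
Proof.
move=> cX aS bS cS Ha_a Hb_b Hc_c XHa XHb XHc nab nac; apply/eqP/negP => /negP nbc.
pose F i := if i == a then Ha else if i == b then Hb else Hc.
have Fa : F a = Ha by rewrite /F eqxx.
have Fb : F b = Hb by rewrite /F eq_sym (negbTE nab) eqxx.
have Fc : F c = Hc by rewrite /F eq_sym (negbTE nac) eq_sym (negbTE nbc).
have codim3 : 3 <= codim W (\big[capv/W]_(i <- [:: a; b; c]) F i).
  apply: (independent_codim_ge (L := [:: a; b; c])) => [|i|i]; rewrite ?inE.
  - by rewrite /= !inE negb_or nab nac nbc.
  - by case/or3P=> /eqP ->.
  - by case/or3P=> /eqP ->; rewrite ?Fa ?Fb ?Fc.
have /andP[HaW _] := hA (partition_mem aS Ha_a).
have : (X <= \big[capv/W]_(i <- [:: a; b; c]) F i)%VS.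
  by rewrite bigcapv_subP (subv_trans XHa HaW) /= Fa Fb Fc XHa XHb XHc.
by move/(codimS W); lia.
Qed.

End Partition.

End Arrangements.

Section Triple.
Variables (K : fieldType) (l : nat).
Local Notation S := (sub K l).
Variables (A : {fset S}) (pi : seq {fset S}) (H0 : S).
Hypotheses (hA : arrangement fullv A) (hp : is_partition A pi)
           (h0 : H0 \in nth fset0 pi 0).
Implicit Types (X Y H L M : S).

Local Notation B i := (nth fset0 pi i).
Local Notation A' := (deletion A H0).
Local Notation A'' := (restriction A H0).
Local Notation pi' := (pi_del H0 pi).
Local Notation pi'' := (pi_res H0 pi).
Local Notation R C := [fset (H :&: H0)%VS | H in C].
(* [pi'] loses its first block exactly when [d] holds, i.e. when [pi_1 = {H0}] *)
Local Notation d := (B 0 `\ H0 == fset0).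
Local Notation inj_R := {in A `\` B 0 &, injective (fun H => (H :&: H0)%VS)}.

Lemma size_pi_gt0 : 0 < size pi.
Proof. by case: (pi) h0. Qed.

Lemma H0_in_A : H0 \in A.
Proof. exact: (partition_mem hp size_pi_gt0 h0). Qed.

Lemma hyperplane_H0 : hyperplane_in fullv H0.
Proof. exact: hA H0_in_A. Qed.

Lemma subH0_neq_fullv X : (X <= H0)%VS -> X != fullv.
Proof.
move=> XH0; apply: contraTneq (hyperplane_neq hyperplane_H0) => Xf.
by rewrite eqEsubv subvf -Xf XH0.
Qed.

Lemma codim_capH0_le2 H : H \in A -> codim fullv (H :&: H0)%VS <= 2.
Proof.
move=> HA; have := codimI_le (subvf H) (subvf H0).
by rewrite (codim_hyperplane (hA HA)) (codim_hyperplane hyperplane_H0).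
Qed.

Lemma block_neq_H0 k H : k != 0 -> H \in B k -> H != H0.
Proof.
move=> k0 Hk; apply: contra_neq k0 => eH; rewrite eH in Hk.
have kS : k < size pi by rewrite ltnNge; apply: contraTN Hk => /(nth_default _) ->.
exact: (partition_uniq hp kS size_pi_gt0 Hk h0).
Qed.

Lemma block_notin_B0 k H : k < size pi -> k != 0 -> H \in B k -> H \notin B 0.
Proof.
by move=> kS k0 Hk; apply: contra k0 => H0k; rewrite (partition_uniq hp kS size_pi_gt0 Hk H0k).
Qed.

Lemma notin_B0_index k H : H \notin B 0 -> H \in B k -> k != 0.
Proof. by move=> HB0 Hk; apply: contraNneq HB0 => k0; move: Hk; rewrite k0. Qed.

Lemma blockD1_H0 k : k != 0 -> B k `\ H0 = B k.
Proof.
move=> k0; apply/fsetP => H; rewrite in_fsetD1.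
by have [->|] := eqVneq H H0; [apply/esym/negP => /(block_neq_H0 k0)/eqP | ].
Qed.

Lemma pi_delE : pi' = drop d [seq C `\ H0 | C <- pi].
Proof.
have [ne _ _] := hp.
have e_rest : [seq C <- [seq C `\ H0 | C <- behead pi] | C != fset0] =
              [seq C `\ H0 | C <- behead pi].
  apply/all_filterP/allP => _ /mapP [C /(nthP fset0) [k kS <-] ->].
  rewrite nth_behead blockD1_H0 //; apply: ne.
  by move: kS; rewrite size_behead; case: (pi).
rewrite /pi_del; case: (pi) e_rest => [//|C0 rest] /= e_rest.
by rewrite e_rest; case: (C0 `\ H0 == fset0); rewrite /= ?drop0.
Qed.

Lemma size_pi_del : size pi' = size pi - d.
Proof. by rewrite pi_delE size_drop size_map. Qed.

Lemma nth_pi_del j : nth fset0 pi' j = B (j + d) `\ H0.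
Proof.
rewrite pi_delE nth_drop addnC; have [jS|jS] := ltnP (j + d) (size pi).
  by rewrite (nth_map fset0).
rewrite (nth_default _ jS) nth_default ?size_map //; apply/fsetP => H.
by rewrite in_fsetD1 in_fset0 andbF.
Qed.

Lemma pi_del_shift_le k H : H \in B k -> H != H0 -> d <= k.
Proof.
move=> Hk HH0; case: k Hk => [|k] Hk; last by case: (_ `\ _ == _).
by rewrite leqn0 eqb0; apply/fset0Pn; exists H; rewrite in_fsetD1 HH0.
Qed.

Lemma size_pi_res : size pi'' = (size pi).-1.
Proof. by rewrite /pi_res size_map size_behead. Qed.

Lemma nth_pi_res i : i < (size pi).-1 -> nth fset0 pi'' i = R (B i.+1).
Proof. by move=> iS; rewrite /pi_res (nth_map fset0) ?size_behead // nth_behead. Qed.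

Lemma inL_restrictionP X : inL H0 A'' X <-> (X <= H0)%VS /\ inL fullv A X.
Proof.
split=> [XL|[XH0 XL]]; last first.
  by apply/inL_localP; rewrite (capW_local_restriction H0_in_A XH0) -inL_localP.
have XH0 : (X <= H0)%VS by case: XL => C _ ->; exact: capW_sub.
by split=> //; apply/inL_localP; rewrite -(capW_local_restriction H0_in_A XH0) -inL_localP.
Qed.

Lemma inL_deletion X : inL fullv A' X -> inL fullv A X.
Proof.
move=> [C CA ->]; exists C => //; apply/fsubsetP => M /(fsubsetP CA).
by rewrite in_deletion => /andP[].
Qed.

Lemma inL_deletion_nsubH0 X : ~~ (X <= H0)%VS -> inL fullv A X -> inL fullv A' X.
Proof.
move=> XH0 /inL_localP XL; apply/inL_localP; rewrite {1}XL; apply: eq_capW => M.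
rewrite !in_localA in_deletion; have [->|] := eqVneq M H0; last by [].
by rewrite (negbTE XH0) !andbF.
Qed.

Lemma sole_in_deletion C X L : L != H0 -> sole_in A C X L -> sole_in A' C X L.
Proof.
move=> LH0 [LC LA XL uL]; split; rewrite ?in_deletion ?LH0 //.
by move=> M MC; rewrite in_deletion => /andP[_ MA]; apply: uL.
Qed.

Lemma sole_in_of_deletion C X L : ~~ (X <= H0)%VS -> sole_in A' C X L -> sole_in A C X L.
Proof.
move=> XH0 [LC]; rewrite in_deletion => /andP[_ LA] XL uL; split=> // M MC MA XM.
by apply: uL; rewrite // in_deletion MA andbT; apply: contraNneq XH0 => <-.
Qed.

Lemma sole_in_restriction k X L : k.+1 < size pi -> (X <= H0)%VS ->
  sole_in A (B k.+1) X L -> sole_in A'' (R (B k.+1)) X (L :&: H0)%VS.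
Proof.
move=> kS XH0 [LB LA XL uL]; split.
- by apply/imfsetP; exists L.
- by apply/restrictionP; exists L; rewrite ?(block_neq_H0 _ LB).
- by rewrite subv_cap XL XH0.
move=> _ /imfsetP [M MB ->] _; rewrite subv_cap => /andP[XM _].
by rewrite (uL M MB (partition_mem hp kS MB) XM).
Qed.

Lemma sole_in_of_restriction k X Y : inj_R -> k.+1 < size pi -> (X <= H0)%VS ->
  sole_in A'' (R (B k.+1)) X Y -> exists L, sole_in A (B k.+1) X L.
Proof.
move=> injR kS XH0 [/imfsetP [L LB ->] _ XY uY].
have LA := partition_mem hp kS LB.
exists L; split=> //; first exact: subv_trans XY (capvSl _ _).
move=> M MB MA XM.
have MD : M \in A `\` B 0 by rewrite in_fsetD MA (block_notin_B0 kS _ MB).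
have LD : L \in A `\` B 0 by rewrite in_fsetD LA (block_notin_B0 kS _ LB).
apply: (injR _ _ MD LD); apply: uY; first by apply/imfsetP; exists M.
- by apply/restrictionP; exists M; rewrite ?(block_neq_H0 _ MB).
- by rewrite subv_cap XM XH0.
Qed.

Lemma nice_deletion_witness X : nice fullv A' pi' -> inL fullv A' X -> X != fullv ->
  exists2 k, k < size pi & exists L, sole_in A' (B k) X L.
Proof.
move=> hd XL XV; have [j jS [L hL]] := nice_witness hd XL XV.
exists (j + d)%N; first by move: jS; rewrite size_pi_del; lia.
exists L; apply: eq_sole_in hL => M; rewrite nth_pi_del in_fsetD1 in_deletion.
by case/andP=> ->.
Qed.

Lemma nice_restriction_witness X : nice H0 A'' pi'' -> inL H0 A'' X -> X != H0 ->
  exists2 k, k.+1 < size pi & exists Y, sole_in A'' (R (B k.+1)) X Y.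
Proof.
move=> hr XL XH0; have [k kS [Y hY]] := nice_witness hr XL XH0.
rewrite size_pi_res in kS; rewrite nth_pi_res // in hY.
by exists k; [lia | exists Y].
Qed.

Lemma deletion_singleton k X L : k < size pi -> L != H0 -> sole_in A (B k) X L ->
  exists2 j, j < size pi' & #|` nth fset0 pi' j `&` localA A' X| = 1%N.
Proof.
move=> kS LH0 hL; have [LB _ _ _] := hL; have kd := pi_del_shift_le LB LH0.
exists (k - d)%N; first by rewrite size_pi_del; lia.
apply/card_local1P; exists L; rewrite nth_pi_del subnK //.
apply: eq_sole_in (sole_in_deletion LH0 hL) => M.
by rewrite in_deletion in_fsetD1 => /andP[->].
Qed.

Lemma restriction_singleton k X L : k.+1 < size pi -> (X <= H0)%VS ->
  sole_in A (B k.+1) X L -> #|` nth fset0 pi'' k `&` localA A'' X| = 1%N.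
Proof.
move=> kS XH0 hL; rewrite nth_pi_res; last by lia.
by apply/card_local1P; exists (L :&: H0)%VS; apply: sole_in_restriction.
Qed.

Lemma pi_del_partition : is_partition A' pi'.
Proof.
split.
- move=> j jS; have : nth fset0 pi' j \in pi' := mem_nth _ jS.
  by rewrite /pi_del mem_filter => /andP[].
- move=> i j H; rewrite size_pi_del !nth_pi_del !in_fsetD1 => iS jS /andP[_ Hi] /andP[_ Hj].
  have iS' : (i + d < size pi)%N by lia.
  have jS' : (j + d < size pi)%N by lia.
  by have := partition_uniq hp iS' jS' Hi Hj; lia.
- move=> H; rewrite in_deletion; split=> [/andP[HH0 HA]|[j jS]].
    have [k kS Hk] := partition_index hp HA; have kd := pi_del_shift_le Hk HH0.
    exists (k - d)%N; first by rewrite size_pi_del; lia.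
    by rewrite nth_pi_del subnK // in_fsetD1 HH0.
  rewrite nth_pi_del in_fsetD1 => /andP[-> Hk]; apply: (partition_mem hp _ Hk).
  by move: jS; rewrite size_pi_del; lia.
Qed.

Lemma codim_bigcapv_H0 n (g : nat -> S) : g 0 = H0 ->
  codim fullv (\big[capv/fullv]_(i < n.+1) g i) =
  (codim H0 (\big[capv/H0]_(i < n) (g i.+1 :&: H0)%VS)).+1.
Proof.
by move=> g0; rewrite big_ord_recl g0 bigcapvI -(codim_sub_hyperplane hyperplane_H0) ?capvSl.
Qed.

Lemma independent_of_deletion_restriction :
  independent fullv pi' -> independent H0 pi'' -> independent fullv pi.
Proof.
move=> ind' ind'' g hg.
have sS : size pi = (size pi'').+1 by rewrite size_pi_res prednK ?size_pi_gt0.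
have [g0|g0] := eqVneq (g 0) H0.
  have hf i : i < size pi'' -> (g i.+1 :&: H0)%VS \in nth fset0 pi'' i.
    rewrite size_pi_res => iS; rewrite nth_pi_res //.
    by apply/imfsetP; exists (g i.+1) => //; apply: hg; lia.
  by rewrite sS codim_bigcapv_H0 // (ind'' _ hf).
have d0 : d = false.
  by apply/negbTE/fset0Pn; exists (g 0); rewrite in_fsetD1 g0 hg ?size_pi_gt0.
have hg' i : i < size pi' -> g i \in nth fset0 pi' i.
  rewrite size_pi_del nth_pi_del d0 subn0 addn0 in_fsetD1 => iS; rewrite hg // andbT.
  by case: i iS => [//|i] iS; apply: block_neq_H0 (hg _ iS).
by have := ind' _ hg'; rewrite size_pi_del d0 subn0.
Qed.

Lemma independent_pi_del : independent fullv pi -> independent fullv pi'.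
Proof.
move=> ind f hf.
have hfB i : i < size pi' -> f i \in B (i + d).
  by move=> /hf; rewrite nth_pi_del in_fsetD1 => /andP[].
have [d1|d0] := boolP d; last first.
  rewrite size_pi_del (negbTE d0) subn0; apply: ind => i iS.
  by have := hfB i; rewrite size_pi_del (negbTE d0) subn0 addn0; apply.
(* [pi_1 = {H0}]: put [H0] back in front of the chosen hyperplanes *)
have sS : size pi = (size pi').+1 by rewrite size_pi_del d1; have := size_pi_gt0; lia.
pose g i := if i is j.+1 then f j else H0.
have hg i : i < size pi -> g i \in B i.
  by case: i => [|i] iS //=; have := hfB i; rewrite d1 addn1; apply; lia.
have := ind _ hg; rewrite sS big_ord_recl (eq_bigr (fun i : 'I_(size pi') => f i)) //.
set F := \big[capv/fullv]_(i < size pi') f i => codim_all.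
have := codimI_le (subvf H0) (subvf F).
rewrite codim_all (codim_hyperplane hyperplane_H0).
have : codim fullv F <= size pi'.
  apply: codim_bigcapv_ord_le => i iS; have := hfB i iS; rewrite d1 addn1 => fB.
  by apply: hA; apply: (partition_mem hp _ fB); lia.
by lia.
Qed.

Lemma local_of_deletion_restriction X :
  nice fullv A' pi' -> inj_R -> nice H0 A'' pi'' -> inL fullv A X -> X != fullv ->
  exists2 k, k < size pi & exists L, sole_in A (B k) X L.
Proof.
move=> hd injR hr XL XV; have [XH0|XH0] := boolP (X <= H0)%VS; last first.
  have [k kS [L hL]] := nice_deletion_witness hd (inL_deletion_nsubH0 XH0 XL) XV.
  by exists k => //; exists L; exact: sole_in_of_deletion XH0 hL.
have [eXH0|XneH0] := eqVneq X H0.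
  exists 0; first exact: size_pi_gt0.
  exists H0; rewrite eXH0; split; rewrite ?subvv ?H0_in_A //.
  by move=> M _ MA H0M; apply/esym/(hyperplane_eq hyperplane_H0 (hA MA) H0M).
have XL'' : inL H0 A'' X by apply/inL_restrictionP.
have [k kS [Y hY]] := nice_restriction_witness hr XL'' XneH0.
have [L hL] := sole_in_of_restriction injR kS XH0 hY.
by exists k.+1 => //; exists L.
Qed.

Lemma nice_of_deletion_restriction :
  nice fullv A' pi' -> inj_R -> nice H0 A'' pi'' -> nice fullv A pi.
Proof.
move=> hd injR hr; split=> //.
  by case: hd => _ ind' _; case: hr => _ ind'' _; exact: independent_of_deletion_restriction.
move=> X XL XV; have [k kS [L hL]] := local_of_deletion_restriction hd injR hr XL XV.
by exists k => //; apply/card_local1P; exists L.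
Qed.

Lemma local_deletion : nice fullv A pi -> inj_R -> nice H0 A'' pi'' ->
  forall X, inL fullv A' X -> X != fullv ->
  exists2 j, j < size pi' & #|` nth fset0 pi' j `&` localA A' X| = 1%N.
Proof.
move=> hn injR hr X XL' XV.
have [k kS [L hL]] := nice_witness hn (inL_deletion XL') XV.
have [eLH0|LH0] := eqVneq L H0; last exact: deletion_singleton kS LH0 hL.
have XH0 : (X <= H0)%VS by case: hL => _ _; rewrite eLH0.
(* no hyperplane of [A'] contains [H0], so [X = H0] would give [X = fullv] *)
have XneH0 : X != H0.
  apply: contraNneq XV => eXH0; rewrite eqEsubv subvf /=.
  rewrite [X in (_ <= X)%VS](proj1 (inL_localP _ _ _) XL'); apply: sub_capW => // M.
  rewrite in_localA in_deletion eXH0 => /andP[/andP[MH0 MA] H0M].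
  by rewrite -(hyperplane_eq hyperplane_H0 (hA MA) H0M) eqxx in MH0.
have XL'' : inL H0 A'' X by apply/inL_restrictionP; split=> //; exact: inL_deletion.
have [k' k'S [Y hY]] := nice_restriction_witness hr XL'' XneH0.
have [L' hL'] := sole_in_of_restriction injR k'S XH0 hY.
have [L'B _ _ _] := hL'.
exact: deletion_singleton k'S (block_neq_H0 _ L'B) hL'.
Qed.

Lemma nice_deletion_of_nice_restriction :
  nice fullv A pi -> inj_R -> nice H0 A'' pi'' -> nice fullv A' pi'.
Proof.
move=> hn injR hr; split; [exact: pi_del_partition | | exact: local_deletion hn injR hr].
by case: hn => _ ind _; exact: independent_pi_del.
Qed.

Lemma restriction_injective : nice fullv A pi -> nice fullv A' pi' -> inj_R.
Proof.
move=> hn hd H H'; rewrite !in_fsetD => /andP[HB0 HA] /andP[H'B0 H'A] /= eHH'.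
have [//|neHH'] := eqVneq H H'; exfalso; have [_ ind _] := hn.
have HH0 : H != H0 by apply: contraNneq HB0 => ->.
have H'H0 : H' != H0 by apply: contraNneq H'B0 => ->.
set X := (H :&: H0)%VS.
have XH : (X <= H)%VS := capvSl _ _.
have XH0 : (X <= H0)%VS := capvSr _ _.
have XH' : (X <= H')%VS by rewrite /X eHH' capvSl.
have same_block k j M M' : k < size pi -> j < size pi -> M \in B k -> M' \in B j ->
    (X <= M)%VS -> (X <= M')%VS -> k != 0 -> j != 0 -> k = j.
  move=> kS jS Mk M'j XM XM' k0 j0.
  apply: (codim2_two_blocks hp hA ind (codim_capH0_le2 HA) size_pi_gt0 kS jS h0 Mk M'j);
    by rewrite // eq_sym.
have [i iS Hi] := partition_index hp HA; have [j jS H'j] := partition_index hp H'A.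
have i0 := notin_B0_index HB0 Hi.
have ij := same_block _ _ _ _ iS jS Hi H'j XH XH' i0 (notin_B0_index H'B0 H'j).
subst j.
have only_B0 k C L : k < size pi -> sole_in C (B k) X L -> H \in C -> H' \in C -> k = 0.
  move=> kS [LB _ XL uL] HC H'C; apply/eqP; apply: contraT => k0.
  have ik := same_block _ _ _ _ iS kS Hi LB XH XL i0 k0.
  by rewrite -ik in uL; move: neHH'; rewrite (uL H Hi HC XH) (uL H' H'j H'C XH') eqxx.
have [k kS [L0 hL0]] := nice_witness hn (inL_capv HA H0_in_A) (subH0_neq_fullv XH0).
have k0 := only_B0 _ _ _ kS hL0 HA H'A; rewrite {}k0 in hL0.
have X_A' : inL fullv A' X.
  rewrite [X](hyperplaneI_eq (hA HA) hyperplane_H0 (hA HA) (hA H'A)) ?subv_cap ?XH ?XH' //.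
  by apply: inL_capv; rewrite in_deletion ?HH0 ?H'H0.
have [k' k'S [L hL]] := nice_deletion_witness hd X_A' (subH0_neq_fullv XH0).
have k'0 : k' = 0 by apply: only_B0 k'S hL _ _; rewrite in_deletion ?HH0 ?H'H0.
rewrite {}k'0 in hL.
case: hL => LB; rewrite in_deletion => /andP[LH0 LA] XL _.
case: hL0 => _ _ _ uL0; move: LH0.
by rewrite (uL0 L LB LA XL) -(uL0 H0 h0 H0_in_A XH0) eqxx.
Qed.

Lemma restriction_surjective : nice fullv A pi ->
  forall Y, Y \in A'' -> exists2 H, H \in A `\` B 0 & (H :&: H0)%VS = Y.
Proof.
move=> hn _ /restrictionP [H /andP[HH0 HA] ->].
have [HB0|HB0] := boolP (H \in B 0); last by exists H; rewrite // in_fsetD HB0.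
have XH0 : (H :&: H0 <= H0)%VS := capvSr _ _.
have [k kS [L [LB LA XL uL]]] :=
  nice_witness hn (inL_capv HA H0_in_A) (subH0_neq_fullv XH0).
have k0 : k != 0.
  apply: contra_neq HH0 => k0; rewrite k0 in LB uL.
  by rewrite (uL H HB0 HA (capvSl _ _)) (uL H0 h0 H0_in_A XH0).
exists L; first by rewrite in_fsetD LA (block_notin_B0 kS k0 LB).
by apply/esym/(hyperplaneI_eq (W := fullv));
  rewrite ?(hA HA) ?(hA LA) ?hyperplane_H0 ?(block_neq_H0 k0 LB) ?subv_cap ?XL ?XH0.
Qed.

Lemma pi_res_partition : R_bijective A H0 pi -> is_partition A'' pi''.
Proof.
move=> [injR surjR]; have [ne _ _] := hp; split.
- move=> i; rewrite size_pi_res => iS; rewrite nth_pi_res //.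
  have /fset0Pn [H HB] : B i.+1 != fset0 by apply: ne; lia.
  by apply/fset0Pn; exists (H :&: H0)%VS; apply/imfsetP; exists H.
- move=> i j Y; rewrite size_pi_res => iS jS; rewrite !nth_pi_res //.
  move=> /imfsetP [H Hi ->] /imfsetP [H' H'j eHH'].
  have iS' : i.+1 < size pi by lia.
  have jS' : j.+1 < size pi by lia.
  have HD : H \in A `\` B 0.
    by rewrite in_fsetD (block_notin_B0 iS' _ Hi) ?(partition_mem hp iS' Hi).
  have H'D : H' \in A `\` B 0.
    by rewrite in_fsetD (block_notin_B0 jS' _ H'j) ?(partition_mem hp jS' H'j).
  rewrite -(injR _ _ HD H'D eHH') in H'j.
  by have [] := partition_uniq hp iS' jS' Hi H'j.
- move=> Y; split=> [/surjR [H]|[i iS]].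
    rewrite in_fsetD => /andP[HB0 HA] <-.
    have [k kS Hk] := partition_index hp HA; have k0 := notin_B0_index HB0 Hk.
    exists k.-1; first by rewrite size_pi_res; lia.
    rewrite nth_pi_res ?prednK ?lt0n //; last by lia.
    by apply/imfsetP; exists H.
  rewrite size_pi_res in iS; rewrite nth_pi_res // => /imfsetP [H Hi ->].
  have iS' : i.+1 < size pi by lia.
  by apply/restrictionP; exists H; rewrite ?(block_neq_H0 _ Hi) ?(partition_mem hp iS' Hi).
Qed.

Lemma independent_pi_res : independent fullv pi -> independent H0 pi''.
Proof.
move=> ind f hf.
have [g hg] : exists g : nat -> S,
    forall i, i < size pi'' -> g i \in B i.+1 /\ (g i :&: H0)%VS = f i.
  apply: (restriction_lift (F := fun i => B i.+1)) => i iS.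
  by have := hf i iS; rewrite nth_pi_res // -size_pi_res.
pose g' i := if i is j.+1 then g j else H0.
have hg' i : i < size pi -> g' i \in B i.
  by case: i => [|i] iS //=; apply: (hg i _).1; rewrite size_pi_res; lia.
have sS : size pi = (size pi'').+1 by rewrite size_pi_res prednK ?size_pi_gt0.
have := ind _ hg'; rewrite sS codim_bigcapv_H0 // => -[codim_g].
rewrite -[RHS]codim_g; congr (codim _ _); apply: eq_bigr => i _.
by rewrite /= (hg i (ltn_ord i)).2.
Qed.

Lemma closure_deletion_neq_fullv X : inL H0 A'' X -> X != H0 ->
  capW fullv (localA A' X) != fullv.
Proof.
move=> XL XneH0; apply: contra_neq XneH0 => X'V.
have [XH0 _] := proj1 (inL_restrictionP X) XL.
apply/eqP; rewrite eqEsubv XH0 [X in (_ <= X)%VS](proj1 (inL_localP _ _ _) XL) /=.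
apply: sub_capW => // Y; rewrite in_localA => /andP[/restrictionP [M /andP[MH0 MA] ->]].
rewrite !subv_cap subvv andbT => /andP[XM _].
apply: subv_trans (subvf H0) _; rewrite -X'V; apply: capW_subH.
by rewrite in_localA in_deletion MH0 MA XM.
Qed.

Lemma local_restriction : nice fullv A pi -> nice fullv A' pi' ->
  forall X, inL H0 A'' X -> X != H0 ->
  exists2 k, k < size pi'' & #|` nth fset0 pi'' k `&` localA A'' X| = 1%N.
Proof.
move=> hn hd X XL XneH0; have [XH0 XLA] := proj1 (inL_restrictionP X) XL.
have [k kS [L hL]] := nice_witness hn XLA (subH0_neq_fullv XH0).
case: k kS hL => [|k] kS hL; last first.
  by exists k; [rewrite size_pi_res; lia | exact: restriction_singleton kS XH0 hL].
(* [pi_1] only offers [H0] over [X]; use the closure of [X] in [L(A')] instead *)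
have onlyH0 M : M \in B 0 -> M \in A -> (X <= M)%VS -> M = H0.
  by case: hL => _ _ _ uL MB MA XM; rewrite (uL M MB MA XM) -(uL H0 h0 H0_in_A XH0).
set X' := capW fullv (localA A' X).
have XX' : (X <= X')%VS by apply: sub_capW (subvf X) _ => M; rewrite in_localA => /andP[].
have [j jS [L' [L'B]]] := nice_deletion_witness hd (inL_closure A' (subvf X))
  (closure_deletion_neq_fullv XL XneH0).
rewrite in_deletion => /andP[L'H0 L'A] X'L' uL'; have XL' := subv_trans XX' X'L'.
case: j jS L'B uL' => [|j] jS L'B uL'.
  by move: L'H0; rewrite (onlyH0 _ L'B L'A XL') eqxx.
exists j; first by rewrite size_pi_res; lia.
apply: (restriction_singleton (L := L') jS XH0); split=> // M MB MA XM.
have MA' : M \in A' by rewrite in_deletion (block_neq_H0 _ MB) ?MA.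
by apply: uL' => //; apply: capW_subH; rewrite in_localA MA' XM.
Qed.

Lemma nice_restriction_of_nice_deletion :
  nice fullv A pi -> nice fullv A' pi' -> R_bijective A H0 pi /\ nice H0 A'' pi''.
Proof.
move=> hn hd.
have hR : R_bijective A H0 pi := conj (restriction_injective hn hd) (restriction_surjective hn).
split=> //; split; [exact: pi_res_partition | | exact: local_restriction hn hd].
by case: hn => _ ind _; exact: independent_pi_res.
Qed.

End Triple.

Theorem theorem3p5 (K : fieldType) (l : nat) (A : {fset {vspace 'rV[K]_l}})
  (pi : seq {fset {vspace 'rV[K]_l}}) (H0 : {vspace 'rV[K]_l}) :
  arrangement fullv A -> A != fset0 ->
  is_partition A pi -> H0 \in nth fset0 pi 0 ->
  [/\ nice fullv (deletion A H0) (pi_del H0 pi) ->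
        (R_bijective A H0 pi /\ nice H0 (restriction A H0) (pi_res H0 pi)) ->
        nice fullv A pi,
      nice fullv A pi ->
        (R_bijective A H0 pi /\ nice H0 (restriction A H0) (pi_res H0 pi)) ->
        nice fullv (deletion A H0) (pi_del H0 pi)
    & nice fullv A pi -> nice fullv (deletion A H0) (pi_del H0 pi) ->
        (R_bijective A H0 pi /\ nice H0 (restriction A H0) (pi_res H0 pi))].
Proof.
(* [A != fset0] is implied by [H0 \in A] *)
move=> hA _ hp h0; split.
- by move=> hd [[injR _] hr]; exact: nice_of_deletion_restriction hA hp h0 hd injR hr.
- by move=> hn [[injR _] hr]; exact: nice_deletion_of_nice_restriction hA hp h0 hn injR hr.
- exact: nice_restriction_of_nice_deletion hA hp h0.
Qed.
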